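(* Let $q$ be even and $n\ge1$, and let $W$ be an $n$-dimensional Wild subspace over $\mathrm{GF}(q)$. If $f,g\in W$ with $f\neq g$, then $f(1)\neq g(1)$.
   Context: Let $q$ be even. An o-permutation over $\mathrm{GF}(q^n)$ is a function $f:\mathrm{GF}(q^n)\to\mathrm{GF}(q^n)$ with $f(0)=0$ such that, for every $s\in\mathrm{GF}(q^n)$, the map $x\mapsto (f(x+s)+f(s))/x$ is a permutation of $\mathrm{GF}(q^n)\setminus\{0\}$; an o-polynomial is an o-permutation $f$ with $f(1)=1$. Let $\mathfrak F$ be the $\mathrm{GF}(q)$-vector space of all functions $f:\mathrm{GF}(q^n)\to\mathrm{GF}(q^n)$ with $f(0)=0$. An $n$-dimensional Wild subspace over $\mathrm{GF}(q)$ is an $n$-dimensional $\mathrm{GF}(q)$-subspace $W$ of $\mathfrak F$ every nonzero element of which is an o-permutation over $\mathrm{GF}(q^n)$. *)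

From HB Require Import structures.
From mathcomp Require Import all_boot all_order all_algebra all_fingroup all_field.
Set Implicit Arguments. Unset Strict Implicit. Unset Printing Implicit Defensive.
Import GRing.Theory.
Local Open Scope ring_scope.

(* GF(q) is a finite field F; GF(q^n) is a field extension L of F of degree n
   (\dim {:L} = n), made a finite type via [finvect_type]. *)

Definition o_permutation (L : fieldType) (f : L -> L) : Prop :=
  f 0 = 0 /\
  forall s : L,
    let g := fun x : L => (f (x + s) + f s) / x in
    [/\ forall x, x != 0 -> g x != 0,
        forall x y, x != 0 -> y != 0 -> g x = g y -> x = y
      & forall y, y != 0 -> exists2 x, x != 0 & g x = y].

Definition wild_subspace (F : finFieldType) (L : fieldExtType F) (n : nat)
    (W : {vspace {ffun finvect_type L -> L}}) : Prop :=
  [/\ \dim W = n,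
      forall f, f \in W -> f 0 = 0
    & forall f, f \in W -> f != 0 -> o_permutation (fun x : L => f x)].

From HB Require Import structures.
From mathcomp Require Import all_boot all_order all_algebra all_fingroup all_field.
Local Open Scope ring_scope.
Import GRing.Theory.

(* For s = 0 the difference quotient of an o-permutation h is h x / x, which
   is nonzero off 0; apply this to h = f - g at x = 1.  Neither the parity
   of q nor the dimension of W plays a role. *)

Lemma o_permutation_neq0 {L : fieldType} {h : L -> L} {x : L} :
  o_permutation h -> x != 0 -> h x != 0.
Proof.
move=> [h0 hquot] x_neq0.
have [quot_neq0 _ _] := hquot 0.
by have := quot_neq0 x x_neq0; rewrite /= addr0 h0 addr0 mulf_eq0 negb_or => /andP[].
Qed.

Lemma wild_subspace_neq0 {F : finFieldType} {L : fieldExtType F} {n : nat}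
    {W : {vspace {ffun finvect_type L -> L}}} {h : {ffun finvect_type L -> L}}
    {x : L} :
  wild_subspace n W -> h \in W -> h != 0 -> x != 0 -> h x != 0.
Proof. by move=> [_ _ W_oper] hW h_neq0; apply: o_permutation_neq0 (W_oper h hW h_neq0). Qed.

Theorem lemma1 (F : finFieldType) (L : fieldExtType F) (n : nat)
    (W : {vspace {ffun finvect_type L -> L}}) :
  ~~ odd #|F| -> (0 < n)%N -> \dim {:L} = n ->
  wild_subspace n W ->
  forall f g, f \in W -> g \in W -> f != g -> f 1 != g 1.
Proof.
move=> _ _ _ wildW f g fW gW f_neq_g.
have fgW : f - g \in W by rewrite memvB.
have fg_neq0 : f - g != 0 by rewrite subr_eq0.
by have := wild_subspace_neq0 wildW fgW fg_neq0 (oner_neq0 L); rewrite !ffunE subr_eq0.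
Qed.
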